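(* Let $n,k$ be integers with $n\ge 97$ and $\frac{3n}{4}\le k\le n$. Let $M\in\mathcal{S}^{n,k}$ with $\|M\|_F=1$, and suppose $M$ is not positive semidefinite, with smallest eigenvalue $-\lambda_1<0$. Then $$\lambda_1\le\frac{96(n-k)}{n^{3/2}}.$$
   Context: For integers $2\le k\le n$, the $k$-PSD closure $\mathcal{S}^{n,k}$ is the set of all $n\times n$ real symmetric matrices all of whose $k\times k$ principal submatrices are positive semidefinite. $\|\cdot\|_F$ is the Frobenius norm. *)

From HB Require Import structures.
From mathcomp Require Import all_boot all_order all_algebra.
From mathcomp Require Import reals.
Set Implicit Arguments. Unset Strict Implicit. Unset Printing Implicit Defensive.
Import Order.TTheory GRing.Theory Num.Theory.
Local Open Scope ring_scope.

Definition psd (R : realType) (m : nat) (A : 'M[R]_m) : Prop :=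
  A^T = A /\ forall x : 'cV[R]_m, 0 <= (x^T *m A *m x) ord0 ord0.

(* k-PSD closure S^{n,k}: symmetric n x n matrices all of whose k x k
   principal submatrices are PSD.  A k x k principal submatrix is given by
   an injective choice of k indices f : 'I_k -> 'I_n. *)
Definition kPSD (R : realType) (n k : nat) (M : 'M[R]_n) : Prop :=
  M^T = M /\
  forall f : 'I_k -> 'I_n, injective f -> psd (mxsub f f M).

Definition frob (R : realType) (n : nat) (M : 'M[R]_n) : R :=
  Num.sqrt (\sum_(i < n) \sum_(j < n) M i j ^+ 2).

Definition smallest_eigenvalue (R : realType) (n : nat) (M : 'M[R]_n) (a : R)
  : Prop :=
  eigenvalue M a /\ forall b, eigenvalue M b -> a <= b.

From HB Require Import structures.
From mathcomp Require Import all_boot all_order all_algebra all_fingroup.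
From mathcomp Require Import reals.
From mathcomp Require Import ring lra zify.

(* Let v be an eigenvector for -lambda1 and call a coordinate heavy when
   n v_i^2 > 4 |v|^2; there are at most n/4 heavy coordinates, forming a set H.
   Average the nonnegative forms x_S^T M x_S over all k-sets S containing H,
   where x is v damped on H.  By symmetry the average is a combination of
   v^T M v = -lambda1 |v|^2, of the form of M on the light part of v, and of
   the light diagonal sum_(i light) M_ii v_i^2.  The eigenvalue equation and
   Cauchy-Schwarz against ||M||_F = 1 bound minus the light form by
   (lambda1 + 1) |v|^2, and lightness bounds the diagonal term by
   4 |v|^2 / n * sum_i |M_ii| <= 4 |v|^2 / sqrt n.  Comparing gives
   lambda1 (n - |H|) (k - |H| - 1) n <= (n - k) (4 (n - |H|) sqrt n + n),
   and the bound follows since |H| <= n/4 and k >= 3n/4. *)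

Set Implicit Arguments.
Unset Strict Implicit.
Unset Printing Implicit Defensive.

Import Order.TTheory GRing.Theory Num.Theory.
Local Open Scope ring_scope.

Lemma sum_mul_le_of_sqr (R : realFieldType) (I : finType) (x y : I -> R) t :
  0 < t -> \sum_i x i ^+ 2 <= t ^+ 2 -> \sum_i y i ^+ 2 <= 1 ->
  \sum_i x i * y i <= t.
Proof.
move=> t_gt0 x2 y2.
have amgm : 2 * t * \sum_i x i * y i <= \sum_i x i ^+ 2 + t ^+ 2 * \sum_i y i ^+ 2.
  rewrite mulr_sumr big_distrr -big_split /=; apply: ler_sum => i _.
  by have := sqr_ge0 (x i - t * y i); nra.
nra.
Qed.

Lemma sum_abs_le_sqrt (R : rcfType) n (a : 'I_n -> R) :
  \sum_i a i ^+ 2 <= 1 -> \sum_i `|a i| <= Num.sqrt n%:R.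
Proof.
case: n a => [|n] a a2; first by rewrite big_ord0 sqrtr_ge0.
under eq_bigr do rewrite -[`|_|]mul1r.
apply: sum_mul_le_of_sqr; first by rewrite sqrtr_gt0 ltr0n.
  by rewrite sqr_sqrtr // (eq_bigr _ (fun _ _ => expr1n _ _)) sumr_const card_ord.
by rewrite (eq_bigr _ (fun i _ => real_normK (num_real (a i)))).
Qed.

Lemma frob_sqr (R : realType) n (M : 'M[R]_n) :
  frob M ^+ 2 = \sum_i \sum_j M i j ^+ 2.
Proof.
by rewrite sqr_sqrtr // sumr_ge0 // => i _; rewrite sumr_ge0 // => j _; rewrite sqr_ge0.
Qed.

Lemma sym_eigenvector (R : realFieldType) n (M : 'M[R]_n) a :
  M^T = M -> eigenvalue M a ->
  exists2 v : 'I_n -> R,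
    forall i, \sum_j M i j * v j = a * v i & 0 < \sum_i v i ^+ 2.
Proof.
move=> MT /eigenvalueP[u uM u_neq0]; exists (fun i => u 0 i).
  move=> i; have := congr1 (fun w : 'rV_n => w 0 i) uM; rewrite !mxE => <-.
  by apply: eq_bigr => j _; rewrite -[in LHS]MT mxE mulrC.
rewrite lt_def sumr_ge0 ?andbT => [|i _]; last exact: sqr_ge0.
apply: contraNneq u_neq0 => /psumr_eq0P u0; apply/eqP/rowP => i.
by apply/eqP; rewrite mxE -sqrf_eq0 u0 // => j _; apply: sqr_ge0.
Qed.

Section Forms.
Variables (R : comPzRingType) (n : nat).
Implicit Types (A : {set 'I_n}) (M : 'M[R]_n) (v : 'I_n -> R).

Definition qform M v : R := \sum_i \sum_j v i * M i j * v j.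

Definition restr A v i : R := if i \in A then v i else 0.

Lemma qformE M v : qform M v = \sum_i v i * \sum_j M i j * v j.
Proof.
by apply: eq_bigr => i _; rewrite mulr_sumr; apply: eq_bigr => j _; rewrite mulrA.
Qed.

Lemma restr_setC A v i : restr A v i + restr (~: A) v i = v i.
Proof. by rewrite /restr inE; case: (i \in A); rewrite ?addr0 ?add0r. Qed.

Variables (M : 'M[R]_n) (v : 'I_n -> R) (mu : R).
Hypothesis Mv : forall i, \sum_j M i j * v j = mu * v i.

Lemma qform_eigen : qform M v = mu * \sum_i v i ^+ 2.
Proof.
by rewrite qformE mulr_sumr; apply: eq_bigr => i _; rewrite Mv; ring.
Qed.

Lemma qform_restr_eigen A :
  qform M (restr A v) = mu * \sum_i restr A v i ^+ 2
                       - \sum_i \sum_j restr A v i * M i j * restr (~: A) v j.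
Proof.
rewrite qformE mulr_sumr -sumrB; apply: eq_bigr => i _.
have -> : \sum_j M i j * restr A v j =
          mu * v i - \sum_j M i j * restr (~: A) v j.
  by rewrite -Mv -sumrB; apply: eq_bigr => j _; rewrite -(restr_setC A v j); ring.
rewrite mulrBr mulr_sumr; congr (_ - _); last first.
  by apply: eq_bigr => j _; rewrite mulrA.
by rewrite /restr; case: (i \in A); ring.
Qed.

End Forms.

Lemma psd_qform (R : realType) m (A : 'M[R]_m) (y : 'I_m -> R) :
  psd A -> 0 <= qform A y.
Proof.
move=> [_ /(_ (\col_a y a))].
suff -> : ((\col_a y a)^T *m A *m \col_a y a) ord0 ord0 = qform A y by [].
rewrite !mxE /qform exchange_big; apply: eq_bigr => b _.
by rewrite !mxE mulr_suml; apply: eq_bigr => a _; rewrite !mxE.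
Qed.

Lemma restr_sqr_le (R : realDomainType) n (A : {set 'I_n}) (v : 'I_n -> R) i :
  restr A v i ^+ 2 <= v i ^+ 2.
Proof. by rewrite /restr; case: ifP; rewrite ?expr0n ?sqr_ge0. Qed.

Lemma sum_restr_cross_le (R : realFieldType) n (M : 'M[R]_n) (A : {set 'I_n})
    (v : 'I_n -> R) :
  \sum_i \sum_j M i j ^+ 2 <= 1 -> 0 < \sum_i v i ^+ 2 ->
  \sum_i \sum_j restr A v i * M i j * restr (~: A) v j <= \sum_i v i ^+ 2.
Proof.
move=> M2 V_gt0; rewrite pair_bigA /=.
under eq_bigr do rewrite mulrAC.
apply: sum_mul_le_of_sqr => //; last by rewrite -(pair_bigA _ (fun i j => M i j ^+ 2)).
rewrite -(pair_bigA _ (fun i j => (restr A v i * restr (~: A) v j) ^+ 2)) /=.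
rewrite expr2 mulr_suml; apply: ler_sum => i _; rewrite mulr_sumr; apply: ler_sum => j _.
rewrite exprMn; apply: ler_pM; rewrite ?sqr_ge0 ?restr_sqr_le //.
Qed.

Section HeavyCoordinates.
Variables (R : realFieldType) (n : nat) (v : 'I_n -> R) (c : R).
Local Notation V := (\sum_i v i ^+ 2).

Definition heavy : {set 'I_n} := [set i | c * V < n%:R * v i ^+ 2].

Lemma card_heavy_le : 0 < V -> c * #|heavy|%:R <= n%:R.
Proof.
move=> V_gt0; rewrite -(ler_pM2r V_gt0).
apply: (@le_trans _ _ (\sum_(i in heavy) n%:R * v i ^+ 2)).
  by rewrite mulrAC mulr_natr -sumr_const; apply: ler_sum => i; rewrite inE => /ltW.
rewrite mulr_sumr [leRHS](bigID (mem heavy)) lerDl /=.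
by apply: sumr_ge0 => i _; rewrite mulr_ge0 ?sqr_ge0.
Qed.

Lemma sum_light_diag_le (a : 'I_n -> R) : 0 <= c ->
  n%:R * \sum_i a i * restr (~: heavy) v i ^+ 2 <= c * V * \sum_i `|a i|.
Proof.
move=> c_ge0; have V_ge0 : 0 <= V by apply: sumr_ge0 => i _; apply: sqr_ge0.
rewrite mulr_sumr [leRHS]mulr_sumr; apply: ler_sum => i _; rewrite /restr !inE.
case: ifP => [|_]; last by rewrite expr0n mulr0 mulr0 mulr_ge0 ?mulr_ge0.
rewrite -leNgt => light.
have h1 : 0 <= (`|a i| - a i) * (n%:R * v i ^+ 2).
  apply: mulr_ge0; first by rewrite subr_ge0; exact: ler_norm.
  by rewrite mulr_ge0 ?ler0n ?sqr_ge0.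
have h2 : `|a i| * (n%:R * v i ^+ 2) <= `|a i| * (c * V) by rewrite ler_wpM2l.
nra.
Qed.

End HeavyCoordinates.

Section CoveringInjections.
Variables (R : comPzRingType) (n k : nat) (H : {set 'I_n}).
Implicit Types (f : {ffun 'I_k -> 'I_n}) (i j p q : 'I_n).

Definition covering_inj : {set {ffun 'I_k -> 'I_n}} :=
  [set f : {ffun 'I_k -> 'I_n} | injectiveb f && (H \subset codom f)].

Definition incl f i : R := (i \in codom f)%:R.

Definition cnt0 : R := #|covering_inj|%:R.
Definition cnt1 i : R := \sum_(f in covering_inj) incl f i.
Definition cnt2 i j : R := \sum_(f in covering_inj) incl f i * incl f j.

Lemma covering_injP f :
  reflect (injective f /\ {subset H <= codom f}) (f \in covering_inj).
Proof.
by rewrite inE; apply: (iffP andP) => -[injf sH]; split;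
  [apply/injectiveP | apply/subsetP | apply/injectiveP | apply/subsetP].
Qed.

Lemma natr_cardsC : #|~: H|%:R = n%:R - #|H|%:R :> R.
Proof. by apply/eqP; rewrite eq_sym subr_eq -natrD addnC cardsC card_ord. Qed.

Lemma incl_idem f i : incl f i * incl f i = incl f i.
Proof. by rewrite /incl; case: (i \in codom f); rewrite ?mulr1 ?mulr0. Qed.

Lemma incl_cov f i : f \in covering_inj -> i \in H -> incl f i = 1.
Proof. by case/covering_injP => _ sH /sH; rewrite /incl => ->. Qed.

Lemma sum_inj_comp f (G : 'I_n -> R) :
  injective f -> \sum_a G (f a) = \sum_i incl f i * G i.
Proof.
move=> /injectiveP injf; rewrite -big_image -/(codom f) big_uniq //.
by rewrite big_mkcond; apply: eq_bigr => i _; rewrite mulr_natl mulrb.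
Qed.

Lemma sum_incl_setC f :
  f \in covering_inj -> \sum_(j in ~: H) incl f j = k%:R - #|H|%:R.
Proof.
move=> fcov; have /covering_injP[injf _] := fcov.
have := sum_inj_comp (fun _ => 1) injf; rewrite sumr_const card_ord.
under eq_bigr do rewrite mulr1.
rewrite (bigID (mem H)) /= (eq_bigr (fun _ => 1) (fun j => incl_cov fcov)).
rewrite sumr_const => ->; rewrite [RHS]addrC addKr.
by apply: eq_bigl => j; rewrite inE.
Qed.

(* Transpositions of two points outside H permute covering_inj, so cnt1 is
   constant outside H and cnt2 i is constant outside H and i; double counting
   then determines both. *)
Definition relabel p q f : {ffun 'I_k -> 'I_n} := [ffun a => tperm p q (f a)].

Lemma relabelK p q : involutive (relabel p q).
Proof. by move=> f; apply/ffunP => a; rewrite !ffunE tpermK. Qed.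

Lemma relabel_cov p q f : p \notin H -> q \notin H ->
  f \in covering_inj -> relabel p q f \in covering_inj.
Proof.
move=> pH qH /covering_injP[injf sH]; apply/covering_injP; split.
  by move=> a b; rewrite !ffunE => /perm_inj /injf.
move=> i iH; have /codomP[a ia] := sH i iH; apply/codomP; exists a.
by rewrite ffunE -ia tpermD //; [apply: contraNneq pH | apply: contraNneq qH] => ->.
Qed.

Lemma incl_relabel p q f i :
  incl (relabel p q f) i = incl f (tperm p q i).
Proof.
congr ((nat_of_bool _)%:R); apply/codomP/codomP => -[a ia]; exists a.
  by rewrite ia ffunE tpermK.
by rewrite ffunE -ia tpermK.
Qed.

Lemma sum_cov_relabel (G : {ffun 'I_k -> 'I_n} -> R) p q :
  p \notin H -> q \notin H ->
  \sum_(f in covering_inj) G f = \sum_(f in covering_inj) G (relabel p q f).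
Proof.
move=> pH qH; rewrite (reindex_inj (inv_inj (relabelK p q))).
apply: eq_bigl => f; apply/idP/idP => fcov; last exact: relabel_cov.
by rewrite -[f](relabelK p q) relabel_cov.
Qed.

Lemma cnt1_sym p q : p \notin H -> q \notin H -> cnt1 p = cnt1 q.
Proof.
move=> pH qH; rewrite /cnt1 (sum_cov_relabel _ pH qH).
by apply: eq_bigr => f _; rewrite incl_relabel tpermL.
Qed.

Lemma cnt2_sym i p q : p \notin H -> q \notin H -> i != p -> i != q ->
  cnt2 i p = cnt2 i q.
Proof.
move=> pH qH ip iq; rewrite /cnt2 (sum_cov_relabel _ pH qH).
by apply: eq_bigr => f _; rewrite !incl_relabel tpermL tpermD // eq_sym.
Qed.

Lemma cnt1_setC_mul p :
  p \notin H -> (n%:R - #|H|%:R) * cnt1 p = (k%:R - #|H|%:R) * cnt0.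
Proof.
move=> pH; rewrite -natr_cardsC; transitivity (\sum_(j in ~: H) cnt1 j).
  rewrite mulr_natl -sumr_const; apply: eq_bigr => j.
  by rewrite inE => jH; apply: cnt1_sym.
rewrite /cnt1 exchange_big /= (eq_bigr _ sum_incl_setC) sumr_const.
by rewrite /cnt0 mulr_natr.
Qed.

Lemma cnt2_setC_mul i j : i \notin H -> j \notin H -> i != j ->
  (n%:R - #|H|%:R - 1) * cnt2 i j = (k%:R - #|H|%:R - 1) * cnt1 i.
Proof.
move=> iH jH ij; rewrite -natr_cardsC; have iHC : i \in ~: H by rewrite inE.
transitivity (\sum_(j' in ~: H | j' != i) cnt2 i j').
  rewrite (cardsD1 i) iHC natrD addrAC subrr add0r mulr_natl -sumr_const.
  apply: eq_big => [j'|j']; first by rewrite in_setD1 andbC.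
  rewrite in_setD1 inE => /andP[j'i j'H].
  by apply: cnt2_sym; rewrite // eq_sym.
rewrite /cnt2 exchange_big /cnt1 mulr_sumr; apply: eq_bigr => f fcov.
rewrite -mulr_sumr.
have := sum_incl_setC fcov; rewrite (bigD1 i) //= => /(canRL (addKr _)) ->.
by rewrite mulrDr mulrN incl_idem; ring.
Qed.

Lemma cnt1_cov i : i \in H -> cnt1 i = cnt0.
Proof.
move=> iH; rewrite /cnt1 (eq_bigr (fun _ => 1)) ?sumr_const // => f fcov.
exact: incl_cov.
Qed.

Lemma cnt2_covl i j : i \in H -> cnt2 i j = cnt1 j.
Proof. by move=> iH; apply: eq_bigr => f fcov; rewrite incl_cov ?mul1r. Qed.

Lemma cnt2_covr i j : j \in H -> cnt2 i j = cnt1 i.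
Proof. by move=> jH; apply: eq_bigr => f fcov; rewrite (incl_cov fcov jH) ?mulr1. Qed.

Lemma cnt2_id i : cnt2 i i = cnt1 i.
Proof. by apply: eq_bigr => f _; rewrite incl_idem. Qed.

Lemma sum_cov_form (G : 'I_n -> 'I_n -> R) :
  \sum_(f in covering_inj) \sum_a \sum_b G (f a) (f b) =
  \sum_i \sum_j cnt2 i j * G i j.
Proof.
transitivity (\sum_(f in covering_inj) \sum_i \sum_j incl f i * incl f j * G i j).
  apply: eq_bigr => f /covering_injP[injf _].
  rewrite (sum_inj_comp (fun i => \sum_b G i (f b)) injf).
  apply: eq_bigr => i _; rewrite (sum_inj_comp (G i) injf) mulr_sumr.
  by apply: eq_bigr => j _; rewrite mulrA.
rewrite exchange_big; apply: eq_bigr => i _.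
by rewrite exchange_big; apply: eq_bigr => j _; rewrite /cnt2 mulr_suml.
Qed.

End CoveringInjections.

Lemma covering_inj_nonempty n k (H : {set 'I_n}) :
  (#|H| <= k <= n)%N -> exists f, f \in covering_inj k H.
Proof.
case/andP=> Hk kn; pose e := enum H ++ enum (~: H).
have e_size : size e == n by rewrite size_cat -!cardE cardsC card_ord.
have /tuple_uniqP e_inj : uniq (Tuple e_size).
  by rewrite cat_uniq !enum_uniq andbT /=; apply/hasPn => x; rewrite !mem_enum inE.
exists [ffun a => tnth (Tuple e_size) (widen_ord kn a)]; apply/covering_injP.
split=> [a b|i iH]; first by rewrite !ffunE => /e_inj/(congr1 val) /= /val_inj.
have iHe : i \in enum H by rewrite mem_enum.
have ie : (index i e < k)%N by rewrite index_cat iHe (leq_trans _ Hk) // cardE index_mem.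
apply/codomP; exists (Ordinal ie).
by rewrite ffunE (tnth_nth i) /= nth_index // mem_cat iHe.
Qed.

Section AveragedForm.
Variables (R : realType) (n k : nat) (M : 'M[R]_n) (H : {set 'I_n}) (v : 'I_n -> R).
Hypothesis M_kPSD : forall f : 'I_k -> 'I_n, injective f -> psd (mxsub f f M).
Hypothesis cov_gt0 : 0 < cnt0 R k H.
Hypothesis s_gt0 : 0 < k%:R - #|H|%:R :> R.
Hypothesis L_gt1 : 1 < n%:R - #|H|%:R :> R.

Local Notation s := (k%:R - #|H|%:R : R).
Local Notation L := (n%:R - #|H|%:R : R).
Local Notation vL := (restr (~: H) v).

(* The frequencies with which a light point, resp. two distinct light points,
   lie in the image of a covering injection. *)
Let p1 : R := s / L.
Let p2 : R := p1 * ((s - 1) / (L - 1)).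

Lemma cnt1_setC p : p \notin H -> cnt1 R k H p = p1 * cnt0 R k H.
Proof.
move=> pH; apply: (@mulfI _ L); first by rewrite gt_eqF // (lt_trans ltr01).
by rewrite cnt1_setC_mul // /p1 mulrA mulrCA divff ?mulr1 // gt_eqF // (lt_trans ltr01).
Qed.

Lemma cnt2_setC i j :
  i \notin H -> j \notin H -> i != j -> cnt2 R k H i j = p2 * cnt0 R k H.
Proof.
move=> iH jH ij; apply: (@mulfI _ (L - 1)); first by rewrite subr_eq0 gt_eqF.
rewrite cnt2_setC_mul // cnt1_setC // /p2; field.
by rewrite subr_eq0 gt_eqF.
Qed.

(* Damping v by p1 on H gives every pair involving a heavy point the weight
   p1^2, so the average of the test forms differs from p1^2 * qform M v only
   on the light block. *)
Let x i : R := if i \in H then p1 * v i else v i.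

Lemma cnt2_test_vector i j :
  cnt2 R k H i j * (x i * M i j * x j) =
  cnt0 R k H * (p1 ^+ 2 * (v i * M i j * v j)
                + (p2 - p1 ^+ 2) * (vL i * M i j * vL j)
                + (p1 - p2) * ((j == i)%:R * (vL i * M i j * vL j))).
Proof.
rewrite /x /restr !inE.
case: (boolP (i \in H)) => iH; case: (boolP (j \in H)) => jH /=.
- by rewrite cnt2_covl // cnt1_cov //; ring.
- by rewrite cnt2_covl // cnt1_setC //; ring.
- by rewrite cnt2_covr // cnt1_setC //; ring.
case: (eqVneq i j) => [<-|ij].
  by rewrite cnt2_id cnt1_setC //=; ring.
by rewrite cnt2_setC //=; ring.
Qed.

Lemma sum_covering_test_form :
  \sum_(f in covering_inj k H) qform (mxsub f f M) (x \o f) =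
  cnt0 R k H * (p1 ^+ 2 * qform M v + (p2 - p1 ^+ 2) * qform M vL
                + (p1 - p2) * \sum_i M i i * vL i ^+ 2).
Proof.
have diagE : \sum_i \sum_j (j == i)%:R * (vL i * M i j * vL j) =
             \sum_i M i i * vL i ^+ 2.
  apply: eq_bigr => i _; rewrite (eq_bigr _ (fun j _ => mulr_natl _ _)).
  under eq_bigr do rewrite mulrb; rewrite -big_mkcond big_pred1_eq; ring.
transitivity (\sum_(f in covering_inj k H)
                \sum_a \sum_b x (f a) * M (f a) (f b) * x (f b)).
  by apply: eq_bigr => f _; apply: eq_bigr => a _; apply: eq_bigr => b _; rewrite mxE.
rewrite (sum_cov_form k H (fun i j => x i * M i j * x j)) -diagE /qform.
rewrite !mulr_sumr -!big_split mulr_sumr; apply: eq_bigr => i _.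
rewrite !mulr_sumr -!big_split mulr_sumr; apply: eq_bigr => j _.
exact: cnt2_test_vector.
Qed.

Lemma averaged_qform_ge0 :
  0 <= s * (L - 1) * qform M v
       + (L - s) * (L * \sum_i M i i * vL i ^+ 2 - qform M vL).
Proof.
have : 0 <= \sum_(f in covering_inj k H) qform (mxsub f f M) (x \o f).
  by apply: sumr_ge0 => f /covering_injP[injf _]; apply/psd_qform/M_kPSD.
rewrite sum_covering_test_form pmulr_rge0 //; set D := \sum_i _ => E_ge0.
have -> : s * (L - 1) * qform M v + (L - s) * (L * D - qform M vL) =
    (p1 ^+ 2 * qform M v + (p2 - p1 ^+ 2) * qform M vL + (p1 - p2) * D)
    * (L ^+ 2 * (L - 1) / s).
  rewrite /p2 /p1; field.
  by rewrite (gt_eqF s_gt0) subr_eq0 (gt_eqF L_gt1) (gt_eqF (lt_trans ltr01 L_gt1)).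
apply: mulr_ge0 => //; apply: divr_ge0; last exact: ltW.
by apply: mulr_ge0; [exact: sqr_ge0 | rewrite subr_ge0 ltW].
Qed.

End AveragedForm.

Section EigenvectorBound.
Variables (R : realType) (n k : nat) (M : 'M[R]_n) (v : 'I_n -> R) (lam : R).
Hypothesis M_kPSD : forall f : 'I_k -> 'I_n, injective f -> psd (mxsub f f M).
Hypothesis M_sqr : \sum_i \sum_j M i j ^+ 2 = 1.
Hypothesis Mv : forall i, \sum_j M i j * v j = - lam * v i.
Hypothesis lam_gt0 : 0 < lam.
Hypothesis V_gt0 : 0 < \sum_i v i ^+ 2.

Local Notation V := (\sum_i v i ^+ 2).
Local Notation H := (heavy v 4).

Lemma eigen_heavy_bound :
  0 < cnt0 R k H -> 0 < k%:R - #|H|%:R :> R -> 1 < n%:R - #|H|%:R :> R ->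
  (k <= n)%N ->
  lam * (n%:R - #|H|%:R) * (k%:R - #|H|%:R - 1) * n%:R <=
    (n%:R - k%:R) * (4 * (n%:R - #|H|%:R) * Num.sqrt n%:R + n%:R).
Proof.
move=> cov_gt0 s_gt0 L_gt1 kn.
have := averaged_qform_ge0 v M_kPSD cov_gt0 s_gt0 L_gt1.
rewrite (qform_eigen Mv) (qform_restr_eigen Mv).
set b := \sum_i restr _ v i ^+ 2; set B := \sum_i \sum_j _.
set D := \sum_i M i i * _; set s := k%:R - _; set L := n%:R - _ => avg.
have b_le : b <= V by apply: ler_sum => i _; apply: restr_sqr_le.
have B_le : B <= V by apply: sum_restr_cross_le; rewrite ?M_sqr.
have D_le : n%:R * D <= 4 * V * Num.sqrt n%:R.
  apply: le_trans (sum_light_diag_le _ _ _) _ => //.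
  apply: ler_wpM2l; first by rewrite mulr_ge0 // ltW.
  apply: sum_abs_le_sqrt.
  rewrite -M_sqr; apply: ler_sum => i _; rewrite (bigD1 i) //= lerDl.
  by apply: sumr_ge0 => j _; apply: sqr_ge0.
have Ls : L - s = n%:R - k%:R by rewrite /L /s; ring.
have Ls_ge0 : 0 <= L - s by rewrite Ls subr_ge0 ler_nat.
have L_ge0 : 0 <= L by apply: ltW (lt_trans ltr01 L_gt1).
have n_ge0 : 0 <= n%:R :> R by [].
have e1 : n%:R * ((L - s) * (lam * b)) <= n%:R * ((L - s) * (lam * V)).
  by do 2![apply: ler_wpM2l => //]; apply: ler_wpM2l => //; apply: ltW.
have e2 : n%:R * ((L - s) * B) <= n%:R * ((L - s) * V) by do 2![apply: ler_wpM2l => //].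
have e3 : (L - s) * (L * (n%:R * D)) <= (L - s) * (L * (4 * V * Num.sqrt n%:R)).
  by do 2![apply: ler_wpM2l => //].
have avg_n := mulr_ge0 n_ge0 avg.
rewrite -(ler_pM2r V_gt0) -Ls; nra.
Qed.

End EigenvectorBound.

Lemma lambda_bound_arith (R : rcfType) (n k h lam : R) :
  97 <= n -> 3 * n <= 4 * k -> k <= n -> 0 <= h -> 4 * h <= n ->
  lam * (n - h) * (k - h - 1) * n <= (n - k) * (4 * (n - h) * Num.sqrt n + n) ->
  lam <= 96 * (n - k) / (n * Num.sqrt n).
Proof.
move=> n97 n3k kn h0 hn; set r := Num.sqrt n => lamB.
have r0 : 0 <= r by exact: sqrtr_ge0.
have r2 : r ^+ 2 = n by rewrite sqr_sqrtr //; lra.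
have r1 : 1 <= r by nra.
have P_gt0 : 0 < (n - h) * (k - h - 1) by apply: mulr_gt0; lra.
have key : 4 * (n - h) * n + n * r <= 96 * ((n - h) * (k - h - 1)).
  have K1 : n * r <= n * n by apply: ler_wpM2l; nra.
  have K2 : (n - h) * (n / 2 - 1) <= (n - h) * (k - h - 1) by apply: ler_wpM2l; lra.
  have K3 : (n - h) * 97 <= (n - h) * n by apply: ler_wpM2l; lra.
  have K4 : 3 * n * n <= 4 * (n - h) * n by apply: ler_wpM2r; lra.
  nra.
rewrite ler_pdivlMr; last by apply: mulr_gt0; lra.
rewrite -(ler_pM2r P_gt0).
have e1 := ler_wpM2l r0 lamB.
have e2 : (n - k) * (4 * (n - h) * n + n * r) <= (n - k) * (96 * ((n - h) * (k - h - 1))).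
  by apply: ler_wpM2l => //; lra.
nra.
Qed.

Theorem lemma4 (R : realType) (n k : nat) (M : 'M[R]_n) (lambda1 : R) :
  (97 <= n)%N -> (3 * n <= 4 * k)%N -> (k <= n)%N ->
  kPSD k M -> frob M = 1 -> ~ psd M ->
  smallest_eigenvalue M (- lambda1) -> 0 < lambda1 ->
  lambda1 <= 96%:R * (n - k)%:R / (n%:R * Num.sqrt n%:R).
Proof.
move=> n97 n3k kn [MT M_kPSD] frobM _ [eigM _] lam_gt0.
have [v Mv V_gt0] := sym_eigenvector MT eigM.
have M_sqr : \sum_i \sum_j M i j ^+ 2 = 1 by rewrite -frob_sqr frobM expr1n.
have := card_heavy_le 4 V_gt0; rewrite -natrM ler_nat; set H := heavy v 4 => H_le.
have [f fcov] : exists f, f \in covering_inj k H.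
  by apply: covering_inj_nonempty; apply/andP; split; lia.
have cov_gt0 : 0 < cnt0 R k H by rewrite ltr0n card_gt0; apply/set0Pn; exists f.
have nR : 97 <= n%:R :> R by rewrite ler_nat.
have kR : 3 * n%:R <= 4 * k%:R :> R by rewrite -!natrM ler_nat.
have knR : k%:R <= n%:R :> R by rewrite ler_nat.
have hR : 4 * #|H|%:R <= n%:R :> R by rewrite -natrM ler_nat.
rewrite natrB //; apply: (lambda_bound_arith nR kR knR (ler0n R #|H|) hR).
by apply: (eigen_heavy_bound M_kPSD M_sqr Mv lam_gt0 V_gt0 cov_gt0) => //; lra.
Qed.
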